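(* Let $N=pq$ with $p\neq q$ odd primes, and write $\left(\frac{\cdot}{N}\right)$ for the Jacobi symbol modulo $N$. Let $\mu\in\mathsf{J}(N)\setminus\mathsf{QR}(N)$ and $R_1,R_2\in\mathsf{J}(N)$. Let $\alpha_1,\alpha_2$ be integers such that $\mu^{\alpha_1}R_1\in\mathsf{QR}(N)$ and $\mu^{\alpha_2}R_2\in\mathsf{QR}(N)$. Let $\rho_1\in\mathbb{Z}_N$ be a square root of $\mu^{\alpha_1}R_1$ modulo $N$. Let $s_1,s_2\in\mathbb{Z}_N^{\times}$ and set $S_1=s_1^2 \bmod N$, $S_2=s_2^2\bmod N$. Fix an integer $i\ge 1$. Let $(x_i,y_i)$ and $(x_{i+1},y_{i+1})$ be elements of $\mathbb{Z}_N^2$ satisfying \[ \mu^{\alpha_1}R_1 S_1^{2i+1} x_i^2 + \mu^{\alpha_2}R_2 S_2^{2i+1}y_i^2 = 1 \bmod N, \qquad \mu^{\alpha_1}R_1 S_1^{2i+3} x_{i+1}^2 + \mu^{\alpha_2}R_2 S_2^{2i+3}y_{i+1}^2 = 1 \bmod N. \] Define \[ k_i=\left(\frac{1+x_i s_1^{2i+1}\rho_1}{N}\right),\qquad k_{i+1}=\left(\frac{1+x_{i+1} s_1^{2i+3}\rho_1}{N}\right), \qquad D = 1 + \mu^{\alpha_1}R_1 S_1^{2i+2} x_i x_{i+1}, \] and assume $D\in\mathbb{Z}_N^{\times}$. Set \[ x_* = \frac{x_i + S_1 x_{i+1}}{D},\qquad y_* = \frac{y_i y_{i+1}}{D}\quad(\text{in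 } \mathbb{Z}_N), \] so that $(x_*,y_* )$ is a solution of \[ \mu^{\alpha_1}R_1 S_1^{2i+1} x_*^2 + \mu^{2\alpha_2}R_2^2 S_2^{4i+4}y_*^2 = 1 \bmod N. \] Assume moreover that $1+x_i s_1^{2i+1}\rho_1$, $1+x_{i+1} s_1^{2i+3}\rho_1$ and $2 + 2y_* \mu^{\alpha_2}R_2 S_2^{2i+2}$ are units of $\mathbb{Z}_N$. Then \[ k_{i+1}= k_i \cdot \left(\frac{D}{N}\right)\cdot\left(\frac{2 + 2y_* \mu^{\alpha_2}R_2 S_2^{2i+2}}{N}\right). \]
   Context: $\mathbb{Z}_N^{\times}$ is the multiplicative group of units modulo $N$. $\mathsf{QR}(N)=\{y\in\mathbb{Z}_N^\times : \exists x\in\mathbb{Z}_N^\times,\ y=x^2 \bmod N\}$ is the set of quadratic residues, and $\mathsf{J}(N)$ is the set of elements of $\mathbb{Z}_N$ whose Jacobi symbol modulo $N$ equals $1$. In the paper's setting (the Elashry–Mu–Susilo key exchange), $R_j=\mathcal{H}(\mathrm{id}_j)$ are hashed identities, $(\mu^{\alpha_j},S_j)$ are the publicly exchanged values of party $P_j$, and $k_i$, $k_{i+1}$ are the $i$-th and $(i+1)$-th bits of the shared secret key. *)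

From mathcomp Require Import all_boot all_order all_algebra.
Set Implicit Arguments. Unset Strict Implicit. Unset Printing Implicit Defensive.
Import GRing.Theory.
Local Open Scope ring_scope.

Definition legendre (a p : nat) : int :=
  if (p %| a)%N then 0
  else if [exists x : 'I_p, (x * x == a %[mod p])%N] then 1 else -1.

Definition jacobi (a n : nat) : int :=
  \prod_(p <- primes n) legendre a p ^+ logn p n.

Definition jacZ (N : nat) (a : 'Z_N) : int := jacobi (val a) N.

Definition inJ (N : nat) (a : 'Z_N) : Prop := jacZ a = 1.

Definition inQR (N : nat) (y : 'Z_N) : Prop :=
  y \is a GRing.unit /\ exists x : 'Z_N, x \is a GRing.unit /\ y = x ^+ 2.

From mathcomp Require Import all_boot all_order all_algebra cyclic finfield.
From mathcomp Require Import ring.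
Set Implicit Arguments. Unset Strict Implicit. Unset Printing Implicit Defensive.
Import GRing.Theory.
Local Open Scope ring_scope.

(* Put u = x_i s1^(2i+1) rho1, v = x_(i+1) s1^(2i+3) rho1 and
   c = mu^alpha2 R2 S2^(2i+1).  The two conic equations read
   1 - u^2 = c y_i^2 and 1 - v^2 = c S2^2 y_(i+1)^2, and D = 1 + uv, so
   w = c S2 y_i y_(i+1) satisfies w^2 = (1 - u^2)(1 - v^2).  Then
     (1 + u)(1 + v) * 2(1 + uv + w) = ((1 + u)(1 + v) + w)^2,
   since the right side is (1+u)(1+v) [(1+u)(1+v) + 2w + (1-u)(1-v)], and
   2(1 + uv + w) = D (2 + 2 y_* mu^alpha2 R2 S2^(2i+2)).  So (1 + v) times
   (1 + u) D (2 + ...) is the square of a unit, and the Jacobi symbol is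
   multiplicative, being built from the quadratic characters of the cyclic
   groups F_p^*. *)

Section FinFieldSquares.

Variable F : finFieldType.
Hypothesis oddF : odd #|F|.

Local Notation n := #|F|.-1.

Definition is_square (x : F) := [exists y : F, y * y == x].

Lemma pred_card_gt0 : (0 < n)%N.
Proof. by rewrite -subn1 subn_gt0 finNzRing_gt1. Qed.

Lemma pred_card_even : ~~ odd n.
Proof. by move: oddF; rewrite -[#|F|](prednK (ltnW (finNzRing_gt1 F))) /=. Qed.

Lemma expf_pred_card (x : F) : x != 0 -> x ^+ n = 1.
Proof.
move=> x_nz; apply: (mulIf x_nz).
by rewrite mul1r -exprSr prednK ?expf_card // ltnW ?finNzRing_gt1.
Qed.

Lemma finField_prim_root : {z : F | n.-primitive_root z}.
Proof.
pose nz := enum [pred x : F | x != 0].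
have : has n.-primitive_root nz.
  apply: has_prim_root; first exact: pred_card_gt0.
  - by apply/allP => x; rewrite mem_enum unity_rootE => /expf_pred_card ->.
  - exact: enum_uniq.
  - by rewrite -cardE cardC1.
by move=> has_z; exists (nth 0 nz (find n.-primitive_root nz)); apply: nth_find.
Qed.

Lemma is_square_prim_rootX (z : F) (k : nat) :
  n.-primitive_root z -> is_square (z ^+ k) = ~~ odd k.
Proof.
move=> prim_z; apply/existsP/idP => [[y /eqP y2]|even_k]; last first.
  exists (z ^+ k./2).
  by rewrite -exprD addnn -{2}(odd_double_half k) (negbTE even_k).
have z_nz : z != 0.
  apply: contra_eq_neq (prim_expr_order prim_z) => ->.
  by rewrite expr0n gtn_eqF ?pred_card_gt0 // eq_sym oner_eq0.
have y_nz : y != 0.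
  apply: contraPneq y2 => ->; rewrite mul0r => /esym/eqP.
  by rewrite expf_eq0 (negbTE z_nz) andbF.
have [j y_def] := prim_rootP prim_z (expf_pred_card y_nz).
move: y2; rewrite y_def -exprD => /eqP.
rewrite (eq_prim_root_expr prim_z) => /eqP jk.
have n_even := negbTE pred_card_even.
by rewrite -(odd_mod k n_even) -jk odd_mod // addnn odd_double.
Qed.

Lemma is_squareM (a b : F) :
  a != 0 -> b != 0 -> is_square (a * b) = (is_square a == is_square b).
Proof.
move=> a_nz b_nz; have [z prim_z] := finField_prim_root.
have [i ->] := prim_rootP prim_z (expf_pred_card a_nz).
have [j ->] := prim_rootP prim_z (expf_pred_card b_nz).
by rewrite -exprD !is_square_prim_rootX // oddD; case: (odd i); case: (odd j).
Qed.

End FinFieldSquares.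

Lemma legendre_Fp (p a : nat) : prime p ->
  legendre a p =
    if a%:R == 0 :> 'F_p then 0 else if is_square (a%:R : 'F_p) then 1 else -1.
Proof.
move=> p_pr; rewrite /legendre.
have -> : (p %| a)%N = (a%:R == 0 :> 'F_p) by rewrite -val_eqE /= val_Fp_nat.
case: ifP => // _; congr (if _ then _ else _).
have val_lt (y : 'F_p) : (val y < p)%N by case: y => m /=; rewrite Fp_cast.
apply/existsP/existsP => [[x /eqP x2]|[y /eqP y2]].
  by exists x%:R; rewrite -natrM; apply/eqP/val_inj; rewrite /= !val_Fp_nat.
exists (Ordinal (val_lt y)); apply/eqP => /=.
by have := congr1 val y2; rewrite -[y in y * y]natr_Zp -natrM /= !val_Fp_nat.
Qed.

Lemma legendreM (p a b : nat) : prime p -> odd p ->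
  legendre (a * b) p = legendre a p * legendre b p.
Proof.
move=> p_pr p_odd; rewrite !legendre_Fp // natrM.
have [->|a_nz] := eqVneq (a%:R : 'F_p) 0; first by rewrite mul0r eqxx mul0r.
have [->|b_nz] := eqVneq (b%:R : 'F_p) 0; first by rewrite mulr0 eqxx mulr0.
rewrite (negbTE (mulf_neq0 a_nz b_nz)) is_squareM ?card_Fp //.
by case: is_square; case: is_square.
Qed.

Lemma legendre_modn (p m d : nat) : (p %| d)%N -> legendre (m %% d) p = legendre m p.
Proof. by move=> p_d; rewrite /legendre /dvdn !modn_dvdm. Qed.

Lemma legendre_sqr (p m : nat) : prime p -> ~~ (p %| m)%N -> legendre (m * m) p = 1.
Proof.
move=> p_pr p_m; rewrite /legendre Euclid_dvdM // orbb (negbTE p_m).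
suff -> : [exists x : 'I_p, (x * x == m * m %[mod p])%N] by [].
by apply/existsP; exists (Ordinal (ltn_pmod m (prime_gt0 p_pr))); rewrite /= modnMm.
Qed.

Lemma jacobiM (n a b : nat) : odd n -> jacobi (a * b) n = jacobi a n * jacobi b n.
Proof.
move=> n_odd; rewrite /jacobi -big_split /=; apply: eq_big_seq => p.
rewrite mem_primes => /and3P[p_pr _ p_n].
by rewrite legendreM ?exprMn // (dvdn_odd p_n).
Qed.

Lemma jacobi_modn (n m : nat) : jacobi (m %% n) n = jacobi m n.
Proof.
rewrite /jacobi; apply: eq_big_seq => p; rewrite mem_primes => /and3P[_ _ p_n].
by rewrite legendre_modn.
Qed.

Lemma jacobi_sqr (n m : nat) : coprime n m -> jacobi (m * m) n = 1.
Proof.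
move=> co_nm; rewrite /jacobi big1_seq // => p /andP[_].
rewrite mem_primes => /and3P[p_pr _ p_n].
by rewrite legendre_sqr ?expr1n // -prime_coprime // (coprime_dvdl p_n).
Qed.

Section JacobiZp.

Variable N : nat.
Hypotheses (N_gt1 : (1 < N)%N) (N_odd : odd N).

Lemma val_ZpM (x y : 'Z_N) : val (x * y) = (val x * val y %% N)%N.
Proof. by rewrite /=; congr (_ %% _)%N; apply: Zp_cast. Qed.

Lemma jacZM (x y : 'Z_N) : jacZ (x * y) = jacZ x * jacZ y.
Proof. by rewrite /jacZ val_ZpM jacobi_modn jacobiM. Qed.

Lemma jacZ_sqr (x : 'Z_N) : x \is a GRing.unit -> jacZ (x ^+ 2) = 1.
Proof.
rewrite -[x in x \is a _]natr_Zp unitZpE // => co_xN.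
by rewrite /jacZ expr2 val_ZpM jacobi_modn jacobi_sqr.
Qed.

Lemma eq_jacZ_of_mul_sqr (x y z : 'Z_N) :
    x \is a GRing.unit -> y \is a GRing.unit -> x * y = z ^+ 2 -> jacZ x = jacZ y.
Proof.
move=> x_unit y_unit xy_z.
have z_unit : z \is a GRing.unit.
  by rewrite -(unitrX_pos _ (ltn0Sn 1)) -xy_z unitrM x_unit.
have := jacZ_sqr z_unit; rewrite -xy_z jacZM => xy1.
by rewrite -[LHS]mulr1 -(jacZ_sqr y_unit) expr2 jacZM mulrA xy1 mul1r.
Qed.

End JacobiZp.

Lemma conic_sum_sqr (R : comRingType) (u v w : R) :
  w ^+ 2 = (1 - u ^+ 2) * (1 - v ^+ 2) ->
  (1 + u) * (1 + v) * (2 * (1 + u * v + w)) = ((1 + u) * (1 + v) + w) ^+ 2.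
Proof. by move=> w2; rewrite sqrrD w2; ring. Qed.

Theorem mainTheorem1 (p q : nat) (hp : prime p) (hq : prime q) (hpq : p != q)
  (hpo : odd p) (hqo : odd q)
  (mu R1 R2 rho1 s1 s2 S1 S2 xi yi xi1 yi1 D xs ys : 'Z_(p * q))
  (alpha1 alpha2 : int) (i : nat)
  (hmuJ : inJ mu) (hmuQR : ~ inQR mu)
  (hR1 : inJ R1) (hR2 : inJ R2)
  (hQ1 : inQR (mu ^ alpha1 * R1)) (hQ2 : inQR (mu ^ alpha2 * R2))
  (hrho : rho1 ^+ 2 = mu ^ alpha1 * R1)
  (hs1 : s1 \is a GRing.unit) (hs2 : s2 \is a GRing.unit)
  (hS1 : S1 = s1 ^+ 2) (hS2 : S2 = s2 ^+ 2)
  (hi : (1 <= i)%N)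
  (heq1 : mu ^ alpha1 * R1 * S1 ^+ (2 * i + 1) * xi ^+ 2
          + mu ^ alpha2 * R2 * S2 ^+ (2 * i + 1) * yi ^+ 2 = 1)
  (heq2 : mu ^ alpha1 * R1 * S1 ^+ (2 * i + 3) * xi1 ^+ 2
          + mu ^ alpha2 * R2 * S2 ^+ (2 * i + 3) * yi1 ^+ 2 = 1)
  (hD : D = 1 + mu ^ alpha1 * R1 * S1 ^+ (2 * i + 2) * xi * xi1)
  (hDu : D \is a GRing.unit)
  (hxs : xs = (xi + S1 * xi1) / D)
  (hys : ys = (yi * yi1) / D)
  (hu1 : 1 + xi * s1 ^+ (2 * i + 1) * rho1 \is a GRing.unit)
  (hu2 : 1 + xi1 * s1 ^+ (2 * i + 3) * rho1 \is a GRing.unit)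
  (hu3 : 2 + 2 * ys * mu ^ alpha2 * R2 * S2 ^+ (2 * i + 2) \is a GRing.unit) :
  jacZ (1 + xi1 * s1 ^+ (2 * i + 3) * rho1)
  = jacZ (1 + xi * s1 ^+ (2 * i + 1) * rho1) * jacZ D
    * jacZ (2 + 2 * ys * mu ^ alpha2 * R2 * S2 ^+ (2 * i + 2)).
Proof.
have N_gt1 : (1 < p * q)%N by rewrite (@ltn_mul 1 1) ?prime_gt1.
have N_odd : odd (p * q) by rewrite oddM hpo.
have expS2 (x : 'Z_(p * q)) : x ^+ (2 * i + 2) = x ^+ (2 * i + 1) * x.
  by rewrite -exprSr addn1 addn2.
have expSS (x : 'Z_(p * q)) : x ^+ (2 * i + 3) = x ^+ (2 * i + 1) * x ^+ 2.
  by rewrite -exprD -addnA.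
rewrite hS1 !(exprAC s1 2) expS2 !expSS -hrho in heq1 heq2 hD.
rewrite expS2 expSS in hu2 hu3 *.
set t := s1 ^+ (2 * i + 1) in heq1 heq2 hD hu1 hu2 *.
set c := mu ^ alpha2 * R2 * S2 ^+ (2 * i + 1) in heq1 heq2 *.
set u := xi * t * rho1 in hu1 *; set v := xi1 * (t * s1 ^+ 2) * rho1 in hu2 *.
set E := 2 + _ in hu3 *.
set w := c * S2 * (yi * yi1).
have Duv : D = 1 + u * v by rewrite hD /u /v; ring.
have u2 : 1 - u ^+ 2 = c * yi ^+ 2 by rewrite -heq1 /u; ring.
have v2 : 1 - v ^+ 2 = c * S2 ^+ 2 * yi1 ^+ 2 by rewrite -heq2 /v /c; ring.
have w2 : w ^+ 2 = (1 - u ^+ 2) * (1 - v ^+ 2) by rewrite u2 v2 /w; ring.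
have DE : D * E = 2 * (1 + u * v + w).
  have Dys : D * ys = yi * yi1 by rewrite hys mulrCA divrr ?mulr1.
  by rewrite -Duv /w /c -Dys /E; ring.
rewrite -!jacZM //.
apply: (eq_jacZ_of_mul_sqr N_gt1 N_odd (z := (1 + u) * (1 + v) + w)) => //.
- by rewrite !unitrM hu1 hDu.
- by rewrite -(conic_sum_sqr w2) -DE -mulrA mulrCA mulrA.
Qed.
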